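(* Let $r\in\{1,\dots,p\}$, $l\in\{1,\dots,r\}$, $L=\{1,\dots,l\}$, and let $1\le t_1<\dots<t_l\le r$ be integers; set $t_{l+1}:=r+1$ and $P=\{t_\iota:\iota\in L\}$. Let $\delta_{t_\iota}\in\mathbb{R}$ ($\iota\in L$) satisfy $\delta_{t_\iota}\ge h_{t_{\iota+1}}-h_{t_\iota}$ for all $\iota\in L$ and $\sum_{\iota\in L}\delta_{t_\iota}\le h_{r+1}$. Let $v\in\{1,\dots,p-r+l\}$, $V=\{1,\dots,v\}$, and let $r+1\le q_1<\dots<q_v\le m$ be integers, $Q=\{q_\iota:\iota\in V\}$. For $j\in M$ let $a_j=|\{\iota\in L:t_\iota<j\}|$ and $F_j=\sum_{i=1}^j\pi_i$, and let $A_j\subseteq V$ be arbitrary. Suppose $(\phi_{q_1},\dots,\phi_{q_v})\in\mathbb{R}^v_+$ is such that for every $j\in M$ there exists $\beta_j\ge0$ with $$\max\Big\{\tfrac{\phi_{q_\iota}}{m\pi_{q_\iota}}:\iota\in A_j,\ q_\iota>j\Big\}\le\beta_j\le\min\Big\{\tfrac{\phi_{q_\iota}}{m\pi_{q_\iota}}:\iota\in V\setminus A_j,\ q_\iota>j\Big\}$$ (with $\max\emptyset=-\infty$, $\min\emptyset=+\infty$) and $$\beta_j\Big(F_j-\pi_j-\varepsilon+\sum_{\iota\in V,\ q_\iota>j}\pi_{q_\iota}-\sum_{\iota\in A_j,\ q_\iota>j}\pi_{q_\iota}\Big)\ \ge\ \frac1m\Big(h_{t_{a_j+1}}-h_j-\sum_{\iota\in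 L,\ t_\iota<j}\delta_{t_\iota}-\mathbb{I}(j\in Q)\,\phi_j-\sum_{\iota\in A_j,\ q_\iota>j}\phi_{q_\iota}\Big),$$ where $\mathbb{I}(j\in Q)=1$ if $j\in Q$ and $0$ otherwise, and for $j\in Q$, $\phi_j$ denotes $\phi_{q_\iota}$ with $q_\iota=j$. Then the inequality $$z+\sum_{\iota=1}^l\big(h_{t_\iota}-h_{t_{\iota+1}}+\delta_{t_\iota}\big)x_{t_\iota}+\sum_{\iota=1}^v\phi_{q_\iota}(1-x_{q_\iota})\ \ge\ h_{t_1}$$ is valid for $\operatorname{proj}_{(z,\mathbf{x})}\operatorname{conv}(\mathcal{S}_c)$, and hence valid for $\operatorname{conv}(\mathcal{F}_c)$.
   Context: Let $m\ge2$, $M=\{1,\dots,m\}$, $\varepsilon\in[0,1)$, $\boldsymbol{\pi}\in\mathbb{R}^m$ with $\pi_i>0$, $\pi_i\le\varepsilon$ for all $i$ and $\sum_i\pi_i=1$, and $h_1\ge h_2\ge\dots\ge h_m\ge0$. Let $p=\max\{k:\sum_{i=1}^k\pi_i\le\varepsilon\}$ (so $1\le p\le m-1$). The mixing set with a knapsack constraint is $\mathcal{F}_c=\{(z,\mathbf{x})\in\mathbb{R}_+\times\{0,1\}^m : x_i=0\Rightarrow z\ge h_i\ \forall i\in M,\ \boldsymbol{\pi}^\top\mathbf{x}\le\varepsilon\}$. Let $\Xi_c=\{(z,\mathbf{x})\in\mathbb{R}_+\times\mathbb{R}^m_+ : \mathbf{x}\le\mathbf{1},\ \boldsymbol{\pi}^\top\mathbf{x}\le\varepsilon\}$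 and $\Delta_m=\{\mathbf{y}\in\mathbb{Z}^m_+:\mathbf{1}^\top\mathbf{y}\le1\}$. The bilinear set $\mathcal{S}_c$ is the set of $(z,\mathbf{x};\mathbf{y})\in\Xi_c\times\Delta_m$ satisfying: $(1-x_i)(1-\mathbf{1}^\top\mathbf{y})\ge0$ and $-(1-x_i)(1-\mathbf{1}^\top\mathbf{y})\ge0$ for all $i\in M$; $zy_i-h_iy_i\ge0$ for all $i\in M$; $-x_iy_i\ge0$ for all $i\in M$; $-(1-x_i)y_j\ge0$ for all $i,j\in M$ with $i<j$. *)

(* All index families are nat-indexed and 1-based, as in the paper;
   only indices 1..m (resp. 1..l, 1..v) are meaningful. *)
From mathcomp Require Import all_boot all_order all_algebra.
Set Implicit Arguments. Unset Strict Implicit. Unset Printing Implicit Defensive.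
Import Order.TTheory GRing.Theory Num.Theory.
Local Open Scope ring_scope.

Section Defs.
Variable R : realFieldType.

Definition Fsum (pi : nat -> R) (j : nat) : R := \sum_(1 <= i < j.+1) pi i.

Definition pidx (m : nat) (pi : nat -> R) (eps : R) : nat :=
  \max_(k < m.+1 | Fsum pi k <= eps) (k : nat).

Definition text (t : nat -> nat) (l r : nat) (i : nat) : nat :=
  if i == l.+1 then r.+1 else t i.

Definition acount (t : nat -> nat) (l j : nat) : nat :=
  count (fun i => (t i < j)%N) (iota 1 l).

Definition inQ (q : nat -> nat) (v j : nat) : bool :=
  has (fun i => q i == j) (iota 1 v).

Definition Fc (m : nat) (pi h : nat -> R) (eps : R) (z : R) (x : nat -> R) : Prop :=
  0 <= z /\
  (forall i, (1 <= i <= m)%N -> x i = 0 \/ x i = 1) /\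
  (forall i, (1 <= i <= m)%N -> x i = 0 -> h i <= z) /\
  \sum_(1 <= i < m.+1) pi i * x i <= eps.

Definition Xic (m : nat) (pi : nat -> R) (eps : R) (z : R) (x : nat -> R) : Prop :=
  0 <= z /\
  (forall i, (1 <= i <= m)%N -> 0 <= x i /\ x i <= 1) /\
  \sum_(1 <= i < m.+1) pi i * x i <= eps.

Definition Deltam (m : nat) (y : nat -> R) : Prop :=
  (forall i, (1 <= i <= m)%N -> exists n : nat, y i = n%:R) /\
  \sum_(1 <= i < m.+1) y i <= 1.

Definition Sc (m : nat) (pi h : nat -> R) (eps : R)
    (z : R) (x y : nat -> R) : Prop :=
  Xic m pi eps z x /\ Deltam m y /\
  (let sy := \sum_(1 <= i < m.+1) y i in
   (forall i, (1 <= i <= m)%N ->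
      0 <= (1 - x i) * (1 - sy) /\ 0 <= - ((1 - x i) * (1 - sy))) /\
   (forall i, (1 <= i <= m)%N -> 0 <= z * y i - h i * y i) /\
   (forall i, (1 <= i <= m)%N -> 0 <= - (x i * y i)) /\
   (forall i j, (1 <= i)%N -> (i < j)%N -> (j <= m)%N -> 0 <= - ((1 - x i) * y j))).

Definition conv3 (m : nat) (S : R -> (nat -> R) -> (nat -> R) -> Prop)
    (z : R) (x y : nat -> R) : Prop :=
  exists (n : nat) (lam : 'I_n -> R) (zs : 'I_n -> R) (xs ys : 'I_n -> nat -> R),
    (forall k, 0 <= lam k) /\ \sum_k lam k = 1 /\
    (forall k, S (zs k) (xs k) (ys k)) /\
    z = \sum_k lam k * zs k /\
    (forall i, (1 <= i <= m)%N ->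
       x i = \sum_k lam k * xs k i /\ y i = \sum_k lam k * ys k i).

Definition conv2 (m : nat) (S : R -> (nat -> R) -> Prop) (z : R) (x : nat -> R) : Prop :=
  exists (n : nat) (lam : 'I_n -> R) (zs : 'I_n -> R) (xs : 'I_n -> nat -> R),
    (forall k, 0 <= lam k) /\ \sum_k lam k = 1 /\
    (forall k, S (zs k) (xs k)) /\
    z = \sum_k lam k * zs k /\
    (forall i, (1 <= i <= m)%N -> x i = \sum_k lam k * xs k i).

Definition projconv3 (m : nat) (S : R -> (nat -> R) -> (nat -> R) -> Prop)
    (z : R) (x : nat -> R) : Prop :=
  exists y : nat -> R, conv3 m S z x y.

End Defs.

From mathcomp Require Import all_boot all_order all_algebra.
From mathcomp Require Import zify ring lra.
Set Implicit Arguments. Unset Strict Implicit. Unset Printing Implicit Defensive.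
Import Order.TTheory GRing.Theory Num.Theory.
Local Open Scope ring_scope.

(* The inequality is affine in (z, x), so it suffices to check it at the points
   of S_c and of F_c.  As the pi_i sum to 1 > eps, the knapsack constraint rules
   out x = 1, so each such point is a ladder point: for some j, x_i = 1 for
   i < j, x_j = 0 and z >= h_j (for S_c, j is the index with y_j = 1; for F_c,
   the first zero of x).  At a ladder point the t-terms telescope to
   h_{t_1} - h_{t_{a_j+1}} plus the delta_{t_iota} with t_iota < j, and the
   phi-terms with q_iota > j are bounded using beta_j as a multiplier of the
   knapsack constraint; the hypothesis on beta_j is exactly what makes the two
   bounds add up to h_{t_1}. *)

Lemma count_iota_downclosed (P : pred nat) (n : nat) :
  (forall i k, (1 <= i)%N -> (i <= k)%N -> (k <= n)%N -> P k -> P i) ->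
  forall i, (1 <= i <= n)%N -> P i = (i <= count P (iota 1 n))%N.
Proof.
elim: n => [|n IH] P_down i i_in; first by lia.
rewrite -[n.+1]addn1 iotaD count_cat /= add1n addn0.
have count_le : (count P (iota 1 n) <= n)%N by rewrite -[X in (_ <= X)%N](size_iota 1 n) count_size.
case Pn: (P n.+1).
- have -> : count P (iota 1 n) = n.
    rewrite -[RHS](size_iota 1 n); apply/eqP; rewrite -all_count.
    by apply/allP => k; rewrite mem_iota => k_in; apply: (P_down k n.+1) => //; lia.
  have -> : P i by apply: (P_down i n.+1) => //; lia.
  by symmetry; apply/idP; lia.
- rewrite addn0; have [lt_in|->] : (i < n.+1)%N \/ i = n.+1 by lia.
  + by apply: IH; [move=> a b a1 ab bn; apply: P_down; lia | lia].
  + by rewrite Pn; lia.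
Qed.

Section IncreasingIndices.
Variables (f : nat -> nat) (n : nat).
Hypothesis f_incr : forall i, (1 <= i)%N -> (i < n)%N -> (f i < f i.+1)%N.

Lemma incr_ltn i j : (1 <= i)%N -> (i < j)%N -> (j <= n)%N -> (f i < f j)%N.
Proof.
move=> i_ge1 lt_ij j_le_n.
have fD : {in [pred k | (1 <= k <= n)%N] &, {homo f : a b / (a < b)%N}}.
  apply: homo_ltn_in => [a b c|a b|a]; rewrite ?inE.
  - exact: ltn_trans.
  - move=> /andP[a1 an] /andP[b1 bn] c /andP[ac cb]; rewrite inE; lia.
  - by move=> /andP[a1 an] /andP[_ a1n]; apply: f_incr.
by apply: fD => //; rewrite inE; lia.
Qed.

Lemma incr_leq i j : (1 <= i)%N -> (i <= j)%N -> (j <= n)%N -> (f i <= f j)%N.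
Proof.
move=> i_ge1; rewrite leq_eqVlt => /predU1P[-> //|lt_ij] j_le_n.
exact/ltnW/incr_ltn.
Qed.

Lemma incr_inj i j : (1 <= i <= n)%N -> (1 <= j <= n)%N -> f i = f j -> i = j.
Proof.
move=> /andP[i1 iN] /andP[j1 jN] fij; apply/eqP; case: ltngtP => // [lt_ij|lt_ji].
- by have := incr_ltn i1 lt_ij jN; rewrite fij ltnn.
- by have := incr_ltn j1 lt_ji iN; rewrite fij ltnn.
Qed.

Lemma incr_ltn_count j i : (1 <= i <= n)%N ->
  (f i < j)%N = (i <= count (fun k => f k < j) (iota 1 n))%N.
Proof.
apply: count_iota_downclosed => a b a_ge1 ab bn /= fb_lt.
exact: leq_ltn_trans (incr_leq a_ge1 ab bn) fb_lt.
Qed.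

End IncreasingIndices.

Section RealSums.
Variable R : realFieldType.

Lemma ler_sum_uniq_nat (s : seq nat) (a b : nat) (f : nat -> R) :
  uniq s -> {subset s <= index_iota a b} ->
  (forall i, (a <= i < b)%N -> 0 <= f i) ->
  \sum_(i <- s) f i <= \sum_(a <= i < b) f i.
Proof.
move=> s_uniq s_sub f_ge0.
rewrite [leRHS](bigID (mem s)) /= -[X in _ <= X + _]big_filter.
have filter_s : perm_eq [seq i <- index_iota a b | i \in s] s.
  apply: uniq_perm => [||i]; rewrite ?filter_uniq ?iota_uniq //.
  by rewrite mem_filter andb_idr //; apply: s_sub.
rewrite (perm_big _ filter_s) lerDl big_seq_cond sumr_ge0 // => i /andP[].
by rewrite mem_index_iota => /f_ge0.
Qed.

Lemma convex_comb_ge (n : nat) (lam f : 'I_n -> R) (c : R) :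
  (forall k, 0 <= lam k) -> \sum_k lam k = 1 -> (forall k, c <= f k) ->
  c <= \sum_k lam k * f k.
Proof.
move=> lam_ge0 lam_sum1 f_ge.
by rewrite -[leLHS]mul1r -lam_sum1 mulr_suml ler_sum // => k _; rewrite ler_wpM2l.
Qed.

(* [M * beta] acts as a multiplier of the knapsack constraint: it separates
   the items of P priced above it (those in A) from those priced below it. *)
Lemma multiplier_bound (I : eqType) (s : seq I) (P A : pred I) (phi w x : I -> R)
    (M beta G eps D : R) :
  0 < M -> 0 <= beta ->
  {in s, forall i, P i -> A i -> phi i <= M * beta * w i} ->
  {in s, forall i, P i -> ~~ A i -> M * beta * w i <= phi i} ->
  {in s, forall i, P i -> 0 <= x i <= 1} ->
  G + \sum_(i <- s | P i) w i * x i <= eps ->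
  M^-1 * (D - \sum_(i <- s | A i && P i) phi i) <=
    beta * (G - eps + \sum_(i <- s | P i) w i - \sum_(i <- s | A i && P i) w i) ->
  D <= \sum_(i <- s | P i) phi i * (1 - x i).
Proof.
move=> M_gt0 beta_ge0 phiA phiN x01 knapsack dual.
set b := M * beta in phiA phiN *.
have b_ge0 : 0 <= b by rewrite mulr_ge0 // ltW.
have wx : \sum_(i <- s | P i) w i * (1 - x i) =
    \sum_(i <- s | P i) w i - \sum_(i <- s | P i) w i * x i.
  by rewrite -sumrB; apply: eq_bigr => i _; ring.
have {}dual : D - \sum_(i <- s | A i && P i) phi i <=
    b * (G - eps + \sum_(i <- s | P i) w i - \sum_(i <- s | A i && P i) w i).
  by have := ler_wpM2l (ltW M_gt0) dual; rewrite mulrA mulfV ?gt_eqF // mul1r mulrA.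
have slack : b * (G - eps + \sum_(i <- s | P i) w i - \sum_(i <- s | A i && P i) w i) <=
    b * (\sum_(i <- s | P i) w i * (1 - x i) - \sum_(i <- s | A i && P i) w i).
  by rewrite ler_wpM2l //; lra.
have termwise : \sum_(i <- s | A i && P i) phi i - b * \sum_(i <- s | A i && P i) w i
    + b * \sum_(i <- s | P i) w i * (1 - x i) <= \sum_(i <- s | P i) phi i * (1 - x i).
  rewrite !mulr_sumr -sumrB !big_mkcondl -big_split /= big_seq_cond [leRHS]big_seq_cond.
  apply: ler_sum => i /andP[i_s Pi]; have [x0 x1] := andP (x01 i i_s Pi).
  case: ifPn => Ai.
  - by have := phiA i i_s Pi Ai; nra.
  - by have := phiN i i_s Pi Ai; nra.
lra.
Qed.

Definition ineq_lhs (a b : nat -> R) (t q : nat -> nat) (l v : nat)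
    (z : R) (x : nat -> R) : R :=
  z + \sum_(1 <= i < l.+1) a i * x (t i) + \sum_(1 <= i < v.+1) b i * (1 - x (q i)).

Lemma ineq_lhs_convex_comb (a b : nat -> R) (t q : nat -> nat) (l v n : nat)
    (lam zs : 'I_n -> R) (xs : 'I_n -> nat -> R) (z : R) (x : nat -> R) :
  \sum_k lam k = 1 -> z = \sum_k lam k * zs k ->
  (forall i, (1 <= i <= l)%N -> x (t i) = \sum_k lam k * xs k (t i)) ->
  (forall i, (1 <= i <= v)%N -> x (q i) = \sum_k lam k * xs k (q i)) ->
  ineq_lhs a b t q l v z x = \sum_k lam k * ineq_lhs a b t q l v (zs k) (xs k).
Proof.
move=> lam_sum1 -> xt xq.
have xqC i : (1 <= i <= v)%N -> 1 - x (q i) = \sum_k lam k * (1 - xs k (q i)).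
  by move=> i_in; rewrite xq // -[in LHS]lam_sum1 -sumrB; apply: eq_bigr => k _; ring.
rewrite /ineq_lhs (eq_big_nat _ _ (F2 := fun i => a i * \sum_k lam k * xs k (t i)));
  last by move=> i /xt->.
rewrite [X in _ + _ + X](eq_big_nat _ _
    (F2 := fun i => b i * \sum_k lam k * (1 - xs k (q i)))); last by move=> i /xqC->.
under eq_bigr do rewrite mulr_sumr.
under [X in _ + _ + X]eq_bigr do rewrite mulr_sumr.
rewrite exchange_big [X in _ + _ + X]exchange_big /= -!big_split /=.
apply: eq_bigr => k _; rewrite !mulrDr !mulr_sumr.
by congr (_ + _ + _); apply: eq_bigr => i _; ring.
Qed.

Lemma ineq_lhs_convex_ge (a b : nat -> R) (t q : nat -> nat) (l v n : nat)
    (lam zs : 'I_n -> R) (xs : 'I_n -> nat -> R) (z c : R) (x : nat -> R) :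
  (forall k, 0 <= lam k) -> \sum_k lam k = 1 ->
  (forall k, c <= ineq_lhs a b t q l v (zs k) (xs k)) -> z = \sum_k lam k * zs k ->
  (forall i, (1 <= i <= l)%N -> x (t i) = \sum_k lam k * xs k (t i)) ->
  (forall i, (1 <= i <= v)%N -> x (q i) = \sum_k lam k * xs k (q i)) ->
  c <= ineq_lhs a b t q l v z x.
Proof.
move=> lam_ge0 lam_sum1 ge_c z_eq xt xq.
by rewrite (ineq_lhs_convex_comb _ _ lam_sum1 z_eq xt xq) convex_comb_ge.
Qed.

End RealSums.

Lemma acount_leq (t : nat -> nat) (l j : nat) : (acount t l j <= l)%N.
Proof. by rewrite -[X in (_ <= X)%N](size_iota 1 l) count_size. Qed.

Lemma pidx_leq (R : realFieldType) (m : nat) (pi : nat -> R) (eps : R) :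
  (pidx m pi eps <= m)%N.
Proof. by apply/bigmax_leqP => k _; rewrite -ltnS. Qed.

Section LadderPoints.
Variables (R : realFieldType) (m : nat) (pi h : nat -> R) (eps : R).
Hypothesis pi_sum1 : \sum_(1 <= i < m.+1) pi i = 1.
Hypothesis eps_lt1 : eps < 1.

Definition ladder_point (z : R) (x : nat -> R) (j : nat) : Prop :=
  [/\ (1 <= j <= m)%N, h j <= z, x j = 0,
      forall i, (1 <= i < j)%N -> x i = 1 & Xic m pi eps z x].

Lemma knapsack_excludes_ones (x : nat -> R) :
  (forall i, (1 <= i <= m)%N -> x i = 1) -> ~ \sum_(1 <= i < m.+1) pi i * x i <= eps.
Proof.
move=> x1; rewrite (eq_big_nat _ _ (F2 := pi)) ?pi_sum1 => [|i /x1->]; last exact: mulr1.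
by rewrite real_leNgt ?num_real ?eps_lt1.
Qed.

Lemma Sc_ladder_point (z : R) (x y : nat -> R) :
  Sc m pi h eps z x y -> exists j, ladder_point z x j.
Proof.
move=> [[z_ge0 [x01 knapsack]] [[y_nat _] [xy_sum [zy [xy ordy]]]]].
have [/hasP[j] |/hasPn y0] := boolP (has (fun j => y j != 0) (iota 1 m)).
  rewrite mem_iota add1n ltnS => j_in yj_neq0.
  have [k yjk] := y_nat j j_in.
  have yj_gt0 : 0 < y j by rewrite lt0r yj_neq0 yjk ler0n.
  exists j; split=> //.
  - by have := zy j j_in; rewrite -mulrBl pmulr_lge0 // subr_ge0.
  - have := xy j j_in; rewrite oppr_ge0 pmulr_lle0 // => xj_le0.
    by apply/eqP; rewrite eq_le xj_le0; case: (x01 j j_in).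
  - move=> i /andP[i_ge1 lt_ij].
    have := ordy i j i_ge1 lt_ij (proj2 (andP j_in)).
    rewrite oppr_ge0 pmulr_lle0 // subr_le0 => x_ge1.
    by apply/eqP; rewrite eq_le x_ge1 andbT; case: (x01 i _) => //; lia.
have ysum0 : \sum_(1 <= i < m.+1) y i = 0.
  by rewrite big_nat big1 // => i i_in; apply/eqP/negPn/y0; rewrite mem_iota; lia.
exfalso; apply: (knapsack_excludes_ones (x := x)) => // i i_in.
have [] := xy_sum i i_in; rewrite ysum0 subr0 mulr1 => ? ?; lra.
Qed.

Lemma Fc_ladder_point (z : R) (x : nat -> R) :
  Fc m pi h eps z x -> exists j, ladder_point z x j.
Proof.
move=> [z_ge0 [x01 [xh knapsack]]].
have Xic_zx : Xic m pi eps z x.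
  by split=> //; split=> // i /x01[]->; rewrite ?ler01 lexx.
have [zero_ex|/hasPn x_neq0] := boolP (has (fun j => x j == 0) (iota 1 m)).
  have ex_zero : exists j, (1 <= j <= m)%N && (x j == 0).
    by move: zero_ex => /hasP[j]; rewrite mem_iota add1n ltnS => ? ?; exists j; apply/andP.
  have [j /andP[j_in /eqP xj0] j_min] := ex_minnP ex_zero.
  exists j; split=> // [|i /andP[i_ge1 lt_ij]]; first exact: xh.
  have i_in : (1 <= i <= m)%N by lia.
  case: (x01 i i_in) => // xi0.
  by have := j_min i; rewrite i_in xi0 eqxx => /(_ isT); lia.
exfalso; apply: (knapsack_excludes_ones (x := x)) => // i i_in.
by case: (x01 i i_in) => // xi0; have := x_neq0 i; rewrite mem_iota xi0 eqxx; lia.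
Qed.

End LadderPoints.

Section ValidityAtLadderPoints.
Variables (R : realFieldType) (m : nat) (eps : R) (pi h : nat -> R).
Variables (r l : nat) (t : nat -> nat) (delta : nat -> R).
Variables (v : nat) (q : nat -> nat) (A : nat -> nat -> bool) (phi : nat -> R).
Hypothesis pi_bounds : forall i, (1 <= i <= m)%N -> 0 < pi i /\ pi i <= eps.
Hypothesis r_le_m : (r <= m)%N.
Hypothesis l_gt0 : (0 < l)%N.
Hypothesis t1_ge1 : (1 <= t 1%N)%N.
Hypothesis t_incr : forall i, (1 <= i)%N -> (i < l)%N -> (t i < t i.+1)%N.
Hypothesis tl_le_r : (t l <= r)%N.
Hypothesis delta_ge : forall i, (1 <= i <= l)%N ->
  h (text t l r i.+1) - h (t i) <= delta (t i).
Hypothesis q1_gt_r : (r.+1 <= q 1%N)%N.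
Hypothesis q_incr : forall i, (1 <= i)%N -> (i < v)%N -> (q i < q i.+1)%N.
Hypothesis qv_le_m : (q v <= m)%N.
Hypothesis phi_ge0 : forall i, (1 <= i <= v)%N -> 0 <= phi (q i).
Hypothesis beta_exists : forall j, (1 <= j <= m)%N -> exists beta : R,
  0 <= beta /\
  (forall i, (1 <= i <= v)%N -> A j i -> (j < q i)%N ->
     phi (q i) / (m%:R * pi (q i)) <= beta) /\
  (forall i, (1 <= i <= v)%N -> ~~ A j i -> (j < q i)%N ->
     beta <= phi (q i) / (m%:R * pi (q i))) /\
  (m%:R)^-1 * (h (text t l r (acount t l j).+1) - h j
     - \sum_(1 <= i < l.+1 | (t i < j)%N) delta (t i)
     - (if inQ q v j then phi j else 0)
     - \sum_(1 <= i < v.+1 | A j i && (j < q i)%N) phi (q i))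
  <= beta * (Fsum pi j - pi j - eps
     + \sum_(1 <= i < v.+1 | (j < q i)%N) pi (q i)
     - \sum_(1 <= i < v.+1 | A j i && (j < q i)%N) pi (q i)).

Let coef i := h (t i) - h (text t l r i.+1) + delta (t i).

Lemma t_range i : (1 <= i <= l)%N -> (1 <= t i <= r)%N.
Proof.
move=> /andP[i_ge1 i_le_l]; apply/andP; split.
- exact: leq_trans t1_ge1 (incr_leq t_incr _ i_ge1 i_le_l).
- exact: leq_trans (incr_leq t_incr i_ge1 i_le_l _) tl_le_r.
Qed.

Lemma q_range i : (1 <= i <= v)%N -> (r < q i <= m)%N.
Proof.
move=> /andP[i_ge1 i_le_v]; apply/andP; split.
- exact: leq_trans q1_gt_r (incr_leq q_incr _ i_ge1 i_le_v).
- exact: leq_trans (incr_leq q_incr i_ge1 i_le_v _) qv_le_m.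
Qed.

Lemma sum_t_before (F : nat -> R) (j : nat) :
  \sum_(1 <= i < l.+1 | (t i < j)%N) F i = \sum_(1 <= i < (acount t l j).+1) F i.
Proof.
have a_le_l := acount_leq t l j.
have before i : (1 <= i <= l)%N -> (t i < j)%N = (i <= acount t l j)%N.
  exact: incr_ltn_count.
rewrite big_mkcond (big_cat_nat _ (n := (acount t l j).+1)) //= ?ltnS //.
rewrite [X in _ + X]big_nat_cond [X in _ + X]big1 ?addr0 => [|i /andP[i_in _]].
  by apply: eq_big_nat => i i_in; rewrite before ?ifT //; lia.
by rewrite before ?ifN //; lia.
Qed.

Lemma sum_coef_t_before (j : nat) :
  \sum_(1 <= i < l.+1 | (t i < j)%N) coef i =
  h (t 1%N) - h (text t l r (acount t l j).+1)
    + \sum_(1 <= i < l.+1 | (t i < j)%N) delta (t i).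
Proof.
have a_le_l := acount_leq t l j.
have text_t i : (1 <= i <= l)%N -> text t l r i = t i.
  by move=> i_in; rewrite /text ifN //; lia.
rewrite !sum_t_before big_split /=; congr (_ + _).
rewrite (@telescope_sumr_eq _ _ _ (fun i => - h (text t l r i))) => [|//|i i_in].
  by rewrite [text t l r 1]text_t // opprK addrC.
by rewrite [text t l r i]text_t ?opprK 1?addrC //; lia.
Qed.

Section AtLadderPoint.
Variables (z : R) (x : nat -> R) (j : nat).
Hypothesis ladder : ladder_point m pi h eps z x j.

Lemma t_terms_ge :
  h (t 1%N) - h (text t l r (acount t l j).+1)
    + \sum_(1 <= i < l.+1 | (t i < j)%N) delta (t i)
  <= \sum_(1 <= i < l.+1) coef i * x (t i).
Proof.
have [_ _ _ x_before [_ [x01 _]]] := ladder.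
rewrite -sum_coef_t_before [leRHS](bigID (fun i => (t i < j)%N)) /= -[leLHS]addr0.
apply: lerD.
- rewrite big_nat_cond [leRHS]big_nat_cond; apply: ler_sum => i /andP[i_in ti_lt].
  by rewrite x_before ?mulr1 //; have := t_range i_in; lia.
- rewrite big_nat_cond; apply: sumr_ge0 => i /andP[i_in _]; apply: mulr_ge0.
  + by have := delta_ge i_in; rewrite /coef; lra.
  + by have [] := x01 (t i) ltac:(have := t_range i_in; lia).
Qed.

Lemma knapsack_tail :
  Fsum pi j - pi j + \sum_(1 <= i < v.+1 | (j < q i)%N) pi (q i) * x (q i) <= eps.
Proof.
have [j_in _ xj0 x_before [_ [x01 knapsack]]] := ladder.
apply: le_trans knapsack.
rewrite [leRHS](big_cat_nat _ (n := j)) /= ?[X in _ <= _ + X]big_ltn ?ltnS; try lia.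
rewrite xj0 mulr0 add0r.
have -> : Fsum pi j - pi j = \sum_(1 <= i < j) pi i * x i.
  rewrite /Fsum big_nat_recr /= ?addrK; last by lia.
  by apply: eq_big_nat => i i_in; rewrite x_before ?mulr1.
rewrite lerD2l -(big_map q (fun k => (j < k)%N) (fun k => pi k * x k)) -big_filter.
apply: ler_sum_uniq_nat => [||k k_in].
- rewrite filter_uniq // map_inj_in_uniq ?iota_uniq // => a b.
  by rewrite !mem_index_iota !ltnS; apply: incr_inj.
- move=> k; rewrite mem_filter => /andP[j_lt /mapP[i]].
  by rewrite !mem_index_iota ltnS => /q_range qi_in k_eq; lia.
- have k_range : (1 <= k <= m)%N by lia.
  have [[pi_gt0 _] [x_ge0 _]] := (pi_bounds k_range, x01 k k_range).
  exact: mulr_ge0 (ltW pi_gt0) x_ge0.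
Qed.

Lemma q_tail_terms_ge :
  h (text t l r (acount t l j).+1) - h j
    - \sum_(1 <= i < l.+1 | (t i < j)%N) delta (t i)
    - (if inQ q v j then phi j else 0)
  <= \sum_(1 <= i < v.+1 | (j < q i)%N) phi (q i) * (1 - x (q i)).
Proof.
have [j_in _ _ _ [_ [x01 _]]] := ladder.
have [beta [beta_ge0 [betaA [betaN dual]]]] := beta_exists j_in.
have m_gt0 : 0 < m%:R :> R by rewrite ltr0n; lia.
have mpi_gt0 i : (1 <= i <= v)%N -> 0 < m%:R * pi (q i).
  by move=> /q_range i_in; rewrite mulr_gt0 //; case: (pi_bounds (i := q i)) => //; lia.
apply: (multiplier_bound (P := fun i => (j < q i)%N) (A := A j)
  (phi := fun i => phi (q i)) (w := fun i => pi (q i)) (x := fun i => x (q i))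
  m_gt0 beta_ge0 _ _ _ knapsack_tail dual) => i; rewrite mem_index_iota ltnS => i_in jq.
- move=> Ai; have := betaA i i_in Ai jq.
  by rewrite ler_pdivrMr ?mpi_gt0 // [_ * (_ * _)]mulrCA mulrA.
- move=> NAi; have := betaN i i_in NAi jq.
  by rewrite ler_pdivlMr ?mpi_gt0 // [_ * (_ * _)]mulrCA mulrA.
- have qi_range : (1 <= q i <= m)%N by have := q_range i_in; lia.
  by have [x_ge0 x_le1] := x01 (q i) qi_range; apply/andP.
Qed.

Lemma q_terms_ge_tail :
  (if inQ q v j then phi j else 0)
    + \sum_(1 <= i < v.+1 | (j < q i)%N) phi (q i) * (1 - x (q i))
  <= \sum_(1 <= i < v.+1) phi (q i) * (1 - x (q i)).
Proof.
have [_ _ xj0 _ [_ [x01 _]]] := ladder.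
have term_ge0 i : (1 <= i <= v)%N -> 0 <= phi (q i) * (1 - x (q i)).
  move=> i_in; rewrite mulr_ge0 ?phi_ge0 // subr_ge0.
  by have [] := x01 (q i) ltac:(have := q_range i_in; lia).
rewrite [leRHS](bigID (fun i => (j < q i)%N)) /= addrC lerD2r.
case: ifP => [/hasP[i0 i0_in /eqP qi0] | _]; last first.
  by rewrite big_nat_cond sumr_ge0 // => i /andP[/term_ge0].
have i0_range : (1 <= i0 <= v)%N by move: i0_in; rewrite mem_iota; lia.
rewrite big_mkcond (bigD1_seq i0) ?iota_uniq ?mem_index_iota ?ltnS //=.
rewrite qi0 ltnn xj0 subr0 mulr1 lerDl big_seq_cond sumr_ge0 // => i /andP[].
by rewrite mem_index_iota => i_in _; case: ifP => // _; apply: term_ge0.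
Qed.

Lemma ladder_point_valid : h (t 1%N) <= ineq_lhs coef (fun i => phi (q i)) t q l v z x.
Proof.
have [_ hj_le_z _ _ _] := ladder.
have := t_terms_ge; have := q_tail_terms_ge; have := q_terms_ge_tail.
rewrite /ineq_lhs; lra.
Qed.

End AtLadderPoint.

End ValidityAtLadderPoints.

Theorem mainTheorem8 (R : realFieldType) (m : nat) (eps : R) (pi h : nat -> R)
  (Hm : (2 <= m)%N)
  (Heps : 0 <= eps /\ eps < 1)
  (Hpi : forall i, (1 <= i <= m)%N -> 0 < pi i /\ pi i <= eps)
  (Hpisum : \sum_(1 <= i < m.+1) pi i = 1)
  (Hh : forall i j, (1 <= i)%N -> (i <= j)%N -> (j <= m)%N -> h j <= h i)
  (Hhm : 0 <= h m)
  (r l : nat) (t : nat -> nat) (delta : nat -> R)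
  (Hr : (1 <= r <= pidx m pi eps)%N)
  (Hl : (1 <= l <= r)%N)
  (Ht1 : (1 <= t 1%N)%N)
  (Htinc : forall i, (1 <= i)%N -> (i < l)%N -> (t i < t i.+1)%N)
  (Htl : (t l <= r)%N)
  (Hdelta : forall i, (1 <= i <= l)%N ->
     h (text t l r i.+1) - h (t i) <= delta (t i))
  (Hdeltasum : \sum_(1 <= i < l.+1) delta (t i) <= h r.+1)
  (v : nat) (q : nat -> nat)
  (Hv : (1 <= v <= pidx m pi eps - r + l)%N)
  (Hq1 : (r.+1 <= q 1%N)%N)
  (Hqinc : forall i, (1 <= i)%N -> (i < v)%N -> (q i < q i.+1)%N)
  (Hqv : (q v <= m)%N)
  (A : nat -> nat -> bool) (phi : nat -> R)
  (Hphi : forall i, (1 <= i <= v)%N -> 0 <= phi (q i))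
  (Hbeta : forall j, (1 <= j <= m)%N -> exists beta : R,
     0 <= beta /\
     (forall i, (1 <= i <= v)%N -> A j i -> (j < q i)%N ->
        phi (q i) / (m%:R * pi (q i)) <= beta) /\
     (forall i, (1 <= i <= v)%N -> ~~ A j i -> (j < q i)%N ->
        beta <= phi (q i) / (m%:R * pi (q i))) /\
     (m%:R)^-1 * (h (text t l r (acount t l j).+1) - h j
        - \sum_(1 <= i < l.+1 | (t i < j)%N) delta (t i)
        - (if inQ q v j then phi j else 0)
        - \sum_(1 <= i < v.+1 | A j i && (j < q i)%N) phi (q i))
     <= beta * (Fsum pi j - pi j - eps
        + \sum_(1 <= i < v.+1 | (j < q i)%N) pi (q i)
        - \sum_(1 <= i < v.+1 | A j i && (j < q i)%N) pi (q i))) :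
  let lhs (z : R) (x : nat -> R) :=
    z + \sum_(1 <= i < l.+1) (h (t i) - h (text t l r i.+1) + delta (t i)) * x (t i)
      + \sum_(1 <= i < v.+1) phi (q i) * (1 - x (q i)) in
  (forall (z : R) (x : nat -> R),
     projconv3 m (Sc m pi h eps) z x -> h (t 1%N) <= lhs z x) /\
  (forall (z : R) (x : nat -> R),
     conv2 m (Fc m pi h eps) z x -> h (t 1%N) <= lhs z x).
Proof.
move=> lhs.
have r_le_m : (r <= m)%N := leq_trans (proj2 (andP Hr)) (pidx_leq m pi eps).
have l_gt0 : (0 < l)%N by case/andP: Hl.
have valid z x j : ladder_point m pi h eps z x j -> h (t 1%N) <= lhs z x.
  exact: (ladder_point_valid Hpi r_le_m l_gt0 Ht1 Htinc Htl Hdelta Hq1 Hqinc Hqv Hphi Hbeta).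
have t_in i : (1 <= i <= l)%N -> (1 <= t i <= m)%N.
  by move=> /(t_range Ht1 Htinc Htl); lia.
have q_in i : (1 <= i <= v)%N -> (1 <= q i <= m)%N.
  by move=> /(q_range Hq1 Hqinc Hqv); lia.
split=> z x.
- case=> y [n [lam [zs [xs [ys [lam_ge0 [lam_sum1 [S_pts [z_eq x_eq]]]]]]]]].
  apply: (ineq_lhs_convex_ge lam_ge0 lam_sum1 _ z_eq) => [k||].
  + by have [j] := Sc_ladder_point Hpisum Heps.2 (S_pts k); apply: valid.
  + by move=> i /t_in /x_eq[].
  + by move=> i /q_in /x_eq[].
- case=> n [lam [zs [xs [lam_ge0 [lam_sum1 [F_pts [z_eq x_eq]]]]]]].
  apply: (ineq_lhs_convex_ge lam_ge0 lam_sum1 _ z_eq) => [k||].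
  + by have [j] := Fc_ladder_point Hpisum Heps.2 (F_pts k); apply: valid.
  + by move=> i /t_in /x_eq.
  + by move=> i /q_in /x_eq.
Qed.
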